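(* Consider $\min_{y\in\mathbb R^{n_y}}\sum_{i\in\mathcal I}f_i(y)$ with nonempty solution set $\mathcal Y^\star$, where each $f_i$ depends only on $(y_p)_{p\in\mathcal N(i)}$, and the stacked iteration $$\boldsymbol y^{k+1}=A\boldsymbol y^k-\gamma B\nabla\boldsymbol f(\boldsymbol y^k)-\boldsymbol z^k,\qquad \boldsymbol z^{k+1}=\boldsymbol z^k+C\boldsymbol y^{k+1},$$ with $A=\mathrm{diag}((A_p\otimes I_{n_{y_p}})_p)$, $B=\mathrm{diag}((B_p\otimes I_{n_{y_p}})_p)$, $C=\mathrm{diag}((C_p\otimes I_{n_{y_p}})_p)$ for matrices $A_p,B_p,C_p\in\mathbb R^{N_p\times N_p}$. Let $D=\mathrm{diag}((D_p\otimes I_{n_{y_p}})_p)$ for some $D_p\in\mathbb R^{N_p\times N_p}$. Assume each $f_i$ is convex and $L$-smooth, and: (i) $A=BD$, $B\succeq0$, $D\succ0$; (ii) $D\boldsymbol y=\boldsymbol y$ and $B\boldsymbol y=\boldsymbol y$ for all $\boldsymbol y\in\mathcal C$; (iii) $C\succeq0$ and $\mathrm{null}(C)=\mathcal C$; (iv) $BC=CB$; (v) $I-\tfrac12C-\sqrt B\,D\sqrt B\succeq0$. Let $y^\star\in\mathcal Y^\star$, $\boldsymbol y^\star$ the stacked vector with all estimates of $y_p$ equal to $y^\star_p$, and $\mathfrak M(\boldsymbol y):=\max\{\|\Pi_\perp\boldsymbol y\|\,\|\nabla\boldsymbol f(\boldsymbol y^\star)\|,\ |\boldsymbol f(\boldsymbol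 y)-\boldsymbol f(\boldsymbol y^\star)|\}$. Then for any $\boldsymbol y^0$, $\boldsymbol z^0=0$ and $\gamma\in(0,\lambda_{\min}(D)/L)$, the sequence satisfies $\mathfrak M(\boldsymbol y^k_{\mathrm{avg}})\le\mathcal O(1/k)$ for all $k$, where $\boldsymbol y^k_{\mathrm{avg}}=\frac1k\sum_{t=1}^k\boldsymbol y^t$.
   Context: Agents $\mathcal I=\{1,\dots,I\}$; $y=\mathrm{col}((y_p)_{p\in\mathcal P})$, $\mathcal P=\{1,\dots,P\}$, $y_p\in\mathbb R^{n_{y_p}}$; $\mathcal N(i)\subseteq\mathcal P$ are the blocks on which $f_i$ depends. For each $p$, a set $\mathcal V_p\subseteq\mathcal I$ with $\{i:p\in\mathcal N(i)\}\subseteq\mathcal V_p$, $N_p=|\mathcal V_p|$; agent $i\in\mathcal V_p$ keeps $\boldsymbol y_{i,p},\boldsymbol z_{i,p}\in\mathbb R^{n_{y_p}}$, indexed by its position $i_p$ in $\mathcal V_p$. Stacked: $\boldsymbol y=\mathrm{col}((\boldsymbol y_p)_p)$, $\boldsymbol y_p=\mathrm{col}((\boldsymbol y_{i,p})_{i\in\mathcal V_p})$, similarly $\boldsymbol z$. $\tilde{\boldsymbol y}_i$ collects agent $i$'s estimates and $\boldsymbol f(\boldsymbol y)=\sum_i f_i(\tilde{\boldsymbol y}_i)$ ($f_i$ evaluated with $y_p$ replaced by $\boldsymbol y_{i,p}$); thus the $(i,p)$ block of $\nabla\boldsymbol f(\boldsymbol y)$ is $\nabla_{y_p}f_i(\tilde{\boldsymbol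 y}_i)$. Consensus space $\mathcal C=\{\boldsymbol y:\boldsymbol y_p=\mathbf 1_{N_p}\otimes v_p,\ v_p\in\mathbb R^{n_{y_p}}\ \forall p\}$; $\Pi_\parallel=\mathrm{diag}((\tfrac1{N_p}\mathbf 1\mathbf 1^\top\otimes I_{n_{y_p}})_p)$ and $\Pi_\perp=I-\Pi_\parallel$. *)

From HB Require Import structures.
From mathcomp Require Import all_boot all_order all_algebra.
From mathcomp Require Import reals.
Set Implicit Arguments.
Unset Strict Implicit.
Unset Printing Implicit Defensive.
Import Order.TTheory GRing.Theory Num.Theory.
Local Open Scope ring_scope.

Section Euclid.
Variables (R : realType) (T : finType).

Definition dotv (x y : T -> R) : R := \sum_t x t * y t.
Definition normv (x : T -> R) : R := Num.sqrt (dotv x x).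
Definition subv (x y : T -> R) : T -> R := fun t => x t - y t.

Definition has_gradient (f : (T -> R) -> R) (g : (T -> R) -> (T -> R)) :=
  forall x (eps : R), 0 < eps -> exists2 del : R, 0 < del &
    forall h : T -> R, normv h < del ->
      `|f (fun t => x t + h t) - f x - dotv (g x) h| <= eps * normv h.

Definition convex_fun (f : (T -> R) -> R) :=
  forall (x y : T -> R) (a : R), 0 <= a -> a <= 1 ->
    f (fun t => a * x t + (1 - a) * y t) <= a * f x + (1 - a) * f y.

Definition L_smooth (L : R) (f : (T -> R) -> R) (g : (T -> R) -> (T -> R)) :=
  has_gradient f g /\
  forall x y, normv (subv (g x) (g y)) <= L * normv (subv x y).

Definition symmetric_op (M : (T -> R) -> (T -> R)) :=
  forall x y, dotv (M x) y = dotv x (M y).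
Definition psd_op (M : (T -> R) -> (T -> R)) :=
  symmetric_op M /\ forall x, 0 <= dotv x (M x).
Definition pd_op (M : (T -> R) -> (T -> R)) :=
  symmetric_op M /\ forall x, (exists t, x t != 0) -> 0 < dotv x (M x).
Definition op_eigenvalue (M : (T -> R) -> (T -> R)) (lam : R) :=
  exists x : T -> R, (exists t, x t != 0) /\ forall t, M x t = lam * x t.
Definition is_lambda_min (M : (T -> R) -> (T -> R)) (lam : R) :=
  op_eigenvalue M lam /\ forall mu, op_eigenvalue M mu -> lam <= mu.
End Euclid.

Section Network.
Variables (R : realType) (P I : nat) (n : 'I_P -> nat) (V : 'I_P -> {set 'I_I}).

(* index set of y = col((y_p)_p), y_p in R^{n_{y_p}} *)
Definition Yidx := {p : 'I_P & 'I_(n p)}.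
(* index set of the stacked estimate vector: block p, position j (of agent
   enum_val j) in V_p, coordinate c *)
Definition Sidx := {p : 'I_P & ('I_#|V p| * 'I_(n p))%type}.

Definition agent_of (p : 'I_P) (j : 'I_#|V p|) : 'I_I := enum_val j.

(* tilde y_i : agent i's estimates, y_p replaced by y_{i,p}
   (components for p with i \notin V_p are irrelevant, set to 0) *)
Definition loc (y : Sidx -> R) (i : 'I_I) : Yidx -> R :=
  fun u => let: existT p c := u in
    match [pick j : 'I_#|V p| | agent_of j == i] with
    | Some j => y (existT _ p (j, c))
    | None => 0
    end.

Definition fobj (f : 'I_I -> (Yidx -> R) -> R) (y : Sidx -> R) : R :=
  \sum_i f i (loc y i).

Definition gradS (g : 'I_I -> (Yidx -> R) -> (Yidx -> R)) (y : Sidx -> R)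
  : Sidx -> R :=
  fun s => let: existT p (j, c) := s in
    g (agent_of j) (loc y (agent_of j)) (existT _ p c).

(* stacked block-diagonal operator diag((M_p (x) I_{n_{y_p}})_p) *)
Definition bdiag (M : forall p : 'I_P, 'M[R]_#|V p|) (y : Sidx -> R)
  : Sidx -> R :=
  fun s => let: existT p (j, c) := s in
    \sum_(j' : 'I_#|V p|) M p j j' * y (existT _ p (j', c)).

Definition consensus (y : Sidx -> R) :=
  forall p (j j' : 'I_#|V p|) (c : 'I_(n p)),
    y (existT _ p (j, c)) = y (existT _ p (j', c)).

Definition Pi_par (y : Sidx -> R) : Sidx -> R :=
  fun s => let: existT p (j, c) := s in
    (#|V p|%:R)^-1 * \sum_(j' : 'I_#|V p|) y (existT _ p (j', c)).
Definition Pi_perp (y : Sidx -> R) : Sidx -> R :=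
  fun s => y s - Pi_par y s.

Definition lift (ystar : Yidx -> R) : Sidx -> R :=
  fun s => let: existT p (j, c) := s in ystar (existT _ p c).

Definition yavg (ys : nat -> Sidx -> R) (k : nat) : Sidx -> R :=
  fun s => (k%:R)^-1 * \sum_(1 <= t < k.+1) ys t s.

Definition merit (f : 'I_I -> (Yidx -> R) -> R)
  (g : 'I_I -> (Yidx -> R) -> (Yidx -> R)) (ystar : Yidx -> R)
  (y : Sidx -> R) : R :=
  Num.max (normv (Pi_perp y) * normv (gradS g (lift ystar)))
          `|fobj f y - fobj f (lift ystar)|.
End Network.

Arguments bdiag {R P I} n {V} M y _.

(* Write S for the square root of B. The iterates factor through an accumulated
   dual variable sigma: y^(t+1) = S a^t and z^t = B C sigma^t. Since the
   gradient of f at the consensus optimum ystar is orthogonal to the consensus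
   space null(C), it equals C w for some w. With M = S D S, the error
   d^t = a^t - ystar and s^t = S sigma^t + gamma S w, the Lyapunov function
   W_t = <d^t, M d^t>/2 + <s^(t+1), C s^(t+1)>/2 decreases by at least
   gamma times the Bregman gap of f at y^(t+2): this combines the descent
   lemma, lambda_min(D) >= gamma L and condition (v). Summing, the Bregman gaps
   are summable and z^t stays bounded. As C maps the running average to
   z^k / k, convexity pins k (f(avg) - f(ystar)) between <w, z^k> and a
   constant plus <w, z^k>, and ||Pi_perp avg|| <= c ||C avg|| because
   C + Pi_par is invertible. *)

From Pilot Require Import Defs.
From HB Require Import structures.
From mathcomp Require Import all_boot all_order all_algebra.
From mathcomp Require Import reals boolp classical_sets functions.
From mathcomp Require Import ring lra.
Import Order.TTheory GRing.Theory Num.Theory.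
Local Open Scope ring_scope.

Set Implicit Arguments.
Unset Strict Implicit.
Unset Printing Implicit Defensive.

Section InnerProduct.
Variables (R : realType) (T : finType).
Implicit Types (x y z : T -> R).

Definition delta (s : T) : T -> R := fun t => (t == s)%:R.

Lemma subvE x y : subv x y = x - y.
Proof. by []. Qed.

Lemma dotvC x y : dotv x y = dotv y x.
Proof. by apply: eq_bigr => t _; rewrite mulrC. Qed.

Lemma dotvDl x y z : dotv (x + y) z = dotv x z + dotv y z.
Proof. by rewrite /dotv -big_split; apply: eq_bigr => t _; rewrite mulrDl. Qed.

Lemma dotvBl x y z : dotv (x - y) z = dotv x z - dotv y z.
Proof. by rewrite /dotv -sumrB; apply: eq_bigr => t _; rewrite /= mulrBl. Qed.

Lemma dotvZl a x z : dotv (fun t => a * x t) z = a * dotv x z.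
Proof. by rewrite /dotv mulr_sumr; apply: eq_bigr => t _; rewrite mulrA. Qed.

Lemma dotv0l z : dotv 0 z = 0.
Proof. by rewrite /dotv big1 // => t _; rewrite mul0r. Qed.

Lemma dotv_suml (I : Type) (r : seq I) (P : pred I) (F : I -> T -> R) z :
  dotv (\sum_(i <- r | P i) F i) z = \sum_(i <- r | P i) dotv (F i) z.
Proof.
rewrite /dotv exchange_big; apply: eq_bigr => t _.
by rewrite fct_sumE mulr_suml.
Qed.

Lemma dotvDr x y z : dotv z (x + y) = dotv z x + dotv z y.
Proof. by rewrite dotvC dotvDl !(dotvC z). Qed.

Lemma dotvBr x y z : dotv z (x - y) = dotv z x - dotv z y.
Proof. by rewrite dotvC dotvBl !(dotvC z). Qed.

Lemma dotvZr a x z : dotv z (fun t => a * x t) = a * dotv z x.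
Proof. by rewrite dotvC dotvZl dotvC. Qed.

Lemma dotv0r z : dotv z 0 = 0.
Proof. by rewrite dotvC dotv0l. Qed.

Lemma dotv_sumr (I : Type) (r : seq I) (P : pred I) (F : I -> T -> R) z :
  dotv z (\sum_(i <- r | P i) F i) = \sum_(i <- r | P i) dotv z (F i).
Proof. by rewrite dotvC dotv_suml; apply: eq_bigr => i _; rewrite dotvC. Qed.

Lemma dotv_deltar x s : dotv x (delta s) = x s.
Proof.
rewrite /dotv (bigD1 s) //= /delta eqxx mulr1 big1 ?addr0 // => t /negbTE ->.
by rewrite mulr0.
Qed.

Lemma dotv_ge0 x : 0 <= dotv x x.
Proof. by apply: sumr_ge0 => t _; rewrite -expr2 sqr_ge0. Qed.

Lemma dotv_sub_le x y : dotv (x - y) (x - y) <= 2 * dotv x x + 2 * dotv y y.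
Proof.
rewrite dotvBl !dotvBr (dotvC y x).
by have := dotv_ge0 (x + y); rewrite !dotvDl !dotvDr (dotvC y x); lra.
Qed.

Lemma dotv_eq0 x : dotv x x = 0 -> x = 0.
Proof.
move=> /psumr_eq0P x0; apply/funext => t; apply/eqP.
by rewrite -sqrf_eq0 expr2 x0 // => s _; rewrite -expr2 sqr_ge0.
Qed.

Lemma neq0_witness x : x <> 0 -> exists t, x t != 0.
Proof.
move=> x_neq0; apply: contra_notP x_neq0 => /forallNP x0.
by apply/funext => t; apply/eqP/negPn/negP/x0.
Qed.

Lemma normv_ge0 x : 0 <= normv x.
Proof. exact: sqrtr_ge0. Qed.

Lemma normv_sqr x : normv x ^+ 2 = dotv x x.
Proof. by rewrite sqr_sqrtr // dotv_ge0. Qed.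

Lemma normvZ a x : 0 <= a -> normv (fun t => a * x t) = a * normv x.
Proof.
move=> a0; rewrite /normv dotvZl dotvZr mulrA -expr2 sqrtrM ?sqr_ge0 //.
by rewrite sqrtr_sqr ger0_norm.
Qed.

Lemma quadratic_ge0_discr (a b c : R) : 0 <= c ->
  (forall t, 0 <= a + 2 * t * b + t ^+ 2 * c) -> b ^+ 2 <= a * c.
Proof.
move=> c0 H; have [c_eq0|c_neq0] := eqVneq c 0.
  (* with [c = 0] the quadratic is affine, so its slope [2 b] must vanish *)
  suff -> : b = 0 by rewrite c_eq0 expr0n mulr0.
  apply/eqP/negPn/negP => b_neq0.
  have := H (- (a + 1) / (2 * b)); rewrite c_eq0 mulr0 addr0.
  have -> : a + 2 * (- (a + 1) / (2 * b)) * b = -1 by field.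
  by rewrite oppr_ge0 ler10.
have c_gt0 : 0 < c by rewrite lt0r c_neq0.
have := H (- b / c).
have -> : a + 2 * (- b / c) * b + (- b / c) ^+ 2 * c = a - b ^+ 2 / c by field.
by rewrite subr_ge0 ler_pdivrMr.
Qed.

End InnerProduct.

Section SymmetricOperators.
Variables (R : realType) (T : finType).
Implicit Types (x y z : T -> R) (M : (T -> R) -> (T -> R)).

Definition kerop (q : T -> T -> R) x : T -> R := fun s => \sum_t q s t * x t.

Lemma symopE M : symmetric_op M -> M = kerop (fun s t => M (delta R t) s).
Proof.
move=> hM; apply/funext => x; apply/funext => s.
rewrite -[M x s]dotv_deltar hM /dotv; apply: eq_bigr => t _.
by rewrite mulrC -[M _ t]dotv_deltar hM dotvC dotv_deltar.
Qed.

Section Symmetric.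
Variables (M : (T -> R) -> (T -> R)) (hM : symmetric_op M).

Lemma symopD x y : M (x + y) = M x + M y.
Proof.
rewrite (symopE hM); apply/funext => s; rewrite /kerop !fctE -big_split.
by apply: eq_bigr => t _; rewrite mulrDr.
Qed.

Lemma symopB x y : M (x - y) = M x - M y.
Proof.
rewrite (symopE hM); apply/funext => s; rewrite /kerop !fctE -sumrB.
by apply: eq_bigr => t _; rewrite mulrBr.
Qed.

Lemma symopZ a x : M (fun t => a * x t) = fun t => a * M x t.
Proof.
rewrite (symopE hM); apply/funext => s; rewrite /kerop mulr_sumr.
by apply: eq_bigr => t _; rewrite mulrCA.
Qed.

Lemma symop0 : M 0 = 0.
Proof. by have := symopB 0 0; rewrite !subrr. Qed.

Lemma symop_sum (I : Type) (r : seq I) (P : pred I) (F : I -> T -> R) :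
  M (\sum_(i <- r | P i) F i) = \sum_(i <- r | P i) M (F i).
Proof.
elim: r => [|i r IH]; first by rewrite !big_nil symop0.
by rewrite !big_cons; case: (P i); rewrite ?symopD IH.
Qed.

End Symmetric.

Lemma psd_CauchySchwarz M x y : psd_op M ->
  dotv x (M y) ^+ 2 <= dotv x (M x) * dotv y (M y).
Proof.
move=> [hs hp]; apply: quadratic_ge0_discr; first exact: hp.
move=> t; have := hp (x + (fun s => t * y s)).
rewrite (symopD hs) (symopZ hs) !dotvDl !dotvDr !dotvZl !dotvZr.
by rewrite (dotvC y (M x)) (hs x y); lra.
Qed.

Lemma dotv_CauchySchwarz x y : dotv x y ^+ 2 <= dotv x x * dotv y y.
Proof. by apply: (@psd_CauchySchwarz id); split=> // z; exact: dotv_ge0. Qed.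

Lemma dotv_le_normv x y : dotv x y <= normv x * normv y.
Proof.
have nxy_ge0 : 0 <= normv x * normv y by rewrite mulr_ge0 ?normv_ge0.
have : dotv x y ^+ 2 <= (normv x * normv y) ^+ 2.
  by rewrite exprMn !normv_sqr dotv_CauchySchwarz.
nra.
Qed.

Lemma abs_dotv_le x y : `|dotv x y| <= normv x * normv y.
Proof.
rewrite -ler_sqr ?nnegrE ?mulr_ge0 ?normv_ge0 // real_normK ?num_real // exprMn !normv_sqr.
exact: dotv_CauchySchwarz.
Qed.

Lemma psd_form_eq0 M x : psd_op M -> dotv x (M x) = 0 -> M x = 0.
Proof.
move=> [hs hp] hx; apply: dotv_eq0; apply/eqP.
have := psd_CauchySchwarz x (M x) (conj hs hp); rewrite hx mul0r -hs => h.
by rewrite -sqrf_eq0 eq_le h sqr_ge0.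
Qed.

Lemma kerop_bounded q : exists2 K, 0 <= K &
  forall x, dotv (kerop q x) (kerop q x) <= K * dotv x x.
Proof.
exists (\sum_s \sum_t q s t ^+ 2) => [|x].
  by apply: sumr_ge0 => s _; apply: sumr_ge0 => t _; exact: sqr_ge0.
rewrite /dotv mulr_suml; apply: ler_sum => s _.
rewrite -expr2; under [X in X * _]eq_bigr do rewrite expr2.
exact: (dotv_CauchySchwarz (q s) x).
Qed.

Lemma symop_bounded M : symmetric_op M -> exists2 K, 0 <= K &
  forall x, dotv (M x) (M x) <= K * dotv x x.
Proof. by move=> /symopE->; exact: kerop_bounded. Qed.

Lemma psd_sqr_le_form M : psd_op M -> exists2 K, 0 <= K &
  forall x, dotv (M x) (M x) <= K * dotv x (M x).
Proof.
move=> [hs hp]; have [K K_ge0 hK] := symop_bounded hs.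
(* expand [|y - M y|^2 >= 0] *)
have form_le y : dotv y (M y) <= (1 + K) * dotv y y.
  have := dotv_ge0 (y - M y); rewrite dotvBl !dotvBr (dotvC (M y) y).
  by have := hK y; have := hp y; have := dotv_ge0 y; nra.
exists (1 + K); first lra.
move=> x; set a := dotv (M x) (M x).
have a_ge0 : 0 <= a by exact: dotv_ge0.
have := psd_CauchySchwarz x (M x) (conj hs hp); rewrite -hs -/a => hcs.
have [->|a_neq0] := eqVneq a 0; first by rewrite mulr_ge0 ?hp; lra.
have a_gt0 : 0 < a by rewrite lt0r a_neq0.
have : a ^+ 2 <= dotv x (M x) * ((1 + K) * a).
  by apply: le_trans hcs _; rewrite ler_wpM2l ?hp ?form_le.
by have := hp x; nra.
Qed.

Lemma pd_psd M : pd_op M -> psd_op M.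
Proof.
move=> [hM M_gt0]; split=> // x; have [->|/neq0_witness/M_gt0/ltW//] := pselect (x = 0).
by rewrite dotv0l.
Qed.

Lemma psd_sqrt_fix M S y : psd_op S -> (forall x, S (S x) = M x) ->
  M y = y -> S y = y.
Proof.
move=> [hs hp] hSS hMy; apply/eqP; rewrite -subr_eq0; apply/eqP.
set w := S y - y.
have Sw : S w = - w by rewrite (symopB hs) hSS hMy opprB.
have := hp w; rewrite Sw -[- w]add0r dotvBr dotv0r add0r oppr_ge0 => w_le0.
by apply: dotv_eq0; apply/eqP; rewrite eq_le w_le0 dotv_ge0.
Qed.

End SymmetricOperators.

Section MatrixPsd.
Variables (R : realType) (n : nat).
Implicit Types (S C X : 'M[R]_n) (u : 'cV[R]_n).

Lemma trmx_mul_diagE X j : (X^T *m X) j j = \sum_k X k j ^+ 2.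
Proof. by rewrite mxE; apply: eq_bigr => k _; rewrite mxE expr2. Qed.

Lemma mxtrace_trmx_mul_eq0 X : \tr (X^T *m X) = 0 -> X = 0.
Proof.
move=> /psumr_eq0P X0; apply/matrixP => i j; rewrite mxE.
have diag_ge0 k : true -> 0 <= (X^T *m X) k k.
  by rewrite trmx_mul_diagE => _; apply: sumr_ge0 => l _; exact: sqr_ge0.
have /psumr_eq0P Xj0 : \sum_k X k j ^+ 2 = 0 by rewrite -trmx_mul_diagE X0.
by apply/eqP; rewrite -sqrf_eq0 Xj0 // => k _; exact: sqr_ge0.
Qed.

(* The trace argument: [X := S C - C S] anticommutes with [S], which forces
   [S X = 0] and then [X = 0]. *)
Lemma psd_mx_sqrt_commute S C : S^T = S -> C^T = C ->
  (forall u, 0 <= (u^T *m S *m u) 0 0) ->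
  (forall u, (u^T *m S *m u) 0 0 = 0 -> S *m u = 0) ->
  S *m S *m C = C *m S *m S -> S *m C = C *m S.
Proof.
move=> sS sC S_ge0 S_ker SSC; apply/eqP; rewrite -subr_eq0; apply/eqP.
set X := S *m C - C *m S.
have XT : X^T = - X by rewrite /X linearB /= !trmx_mul sS sC opprB.
have SX : S *m X = - (X *m S) by rewrite /X mulmxBr mulmxBl !mulmxA SSC opprB.
have trXSX : \tr (X *m S *m X) = 0.
  have : \tr (X *m S *m X) = - \tr (X *m S *m X).
    by rewrite -{1}mulmxA mxtrace_mulC SX mulNmx linearN.
  by move/eqP; rewrite -addr_eq0 -mulr2n mulrn_eq0 /= => /eqP.
have form_colE j : (X^T *m S *m X) j j = ((col j X)^T *m S *m col j X) 0 0.
  rewrite !mxE; apply: eq_bigr => k _; rewrite !mxE; congr (_ * _).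
  by apply: eq_bigr => l _; rewrite !mxE.
have SX0 : S *m X = 0.
  have form_ge0 j : true -> 0 <= (X^T *m S *m X) j j by rewrite form_colE.
  have /psumr_eq0P form0 : \tr (X^T *m S *m X) = 0.
    by rewrite XT !mulNmx linearN /= trXSX oppr0.
  apply/matrixP => i j; rewrite [RHS]mxE.
  have /matrixP/(_ i 0) := S_ker _ (etrans (esym (form_colE j)) (form0 form_ge0 j isT)).
  by rewrite !mxE => h; rewrite -[RHS]h; apply: eq_bigr => k _; rewrite !mxE.
have XS0 : X *m S = 0 by apply/eqP; rewrite -oppr_eq0 -SX SX0.
apply: mxtrace_trmx_mul_eq0; rewrite XT mulNmx linearN {2}/X mulmxBr linearB /=.
by rewrite !mulmxA XS0 mul0mx mxtrace_mulC mulmxA SX0 mul0mx linear0 subrr oppr0.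
Qed.

End MatrixPsd.

Section OperatorMatrix.
Variables (R : realType) (T : finType).
Implicit Types (x y u : T -> R) (q : T -> T -> R) (M S C : (T -> R) -> (T -> R)).
Local Notation N := #|T|.

Definition colv x : 'cV[R]_N := \col_i x (enum_val i).
Definition vcol (v : 'cV[R]_N) : T -> R := fun t => v (enum_rank t) 0.
Definition mxker q : 'M[R]_N := \matrix_(i, j) q (enum_val i) (enum_val j).
Definition mxop M : 'M[R]_N := mxker (fun s t => M (delta R t) s).

Lemma colvK : cancel colv vcol.
Proof. by move=> x; apply/funext => t; rewrite /vcol mxE enum_rankK. Qed.

Lemma vcolK : cancel vcol colv.
Proof. by move=> v; apply/colP => i; rewrite mxE /vcol enum_valK. Qed.

Lemma colv0 : colv 0 = 0.
Proof. by apply/colP => i; rewrite !mxE. Qed.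

Lemma sum_enum_val (F : T -> R) : \sum_t F t = \sum_(i < N) F (enum_val i).
Proof. exact: (reindex _ (onW_bij _ (enum_val_bij T))). Qed.

Lemma dotv_colv x y : dotv x y = ((colv x)^T *m colv y) 0 0.
Proof. by rewrite mxE /dotv sum_enum_val; apply: eq_bigr => i _; rewrite !mxE. Qed.

Lemma colv_kerop q u : colv (kerop q u) = mxker q *m colv u.
Proof.
apply/colP => i; rewrite !mxE /kerop sum_enum_val.
by apply: eq_bigr => j _; rewrite !mxE.
Qed.

Lemma mxopE M x : symmetric_op M -> colv (M x) = mxop M *m colv x.
Proof. by move=> /symopE {1}->; rewrite colv_kerop. Qed.

Lemma mxop_tr M : symmetric_op M -> (mxop M)^T = mxop M.
Proof.
move=> hM; apply/matrixP => i j; rewrite !mxE.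
by rewrite -[M _ (enum_val j)]dotv_deltar hM dotvC dotv_deltar.
Qed.

Lemma mx_colv_ext (A B : 'M[R]_N) : (forall x, A *m colv x = B *m colv x) -> A = B.
Proof.
move=> AB; apply/matrixP => i j.
by have /matrixP/(_ i 0) := AB (vcol (delta_mx j 0)); rewrite vcolK -!colE !mxE.
Qed.

Lemma psd_sqrt_commute S C : psd_op S -> symmetric_op C ->
  (forall x, S (S (C x)) = C (S (S x))) -> forall x, S (C x) = C (S x).
Proof.
move=> [sS pS] sC SSC x; apply: (can_inj colvK); rewrite !mxopE // !mulmxA.
congr (_ *m _); apply: psd_mx_sqrt_commute; rewrite ?mxop_tr //.
- by move=> v; rewrite -[v]vcolK -mulmxA -mxopE // -dotv_colv.
- move=> v; rewrite -[v]vcolK -mulmxA -mxopE // -dotv_colv.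
  by move/(psd_form_eq0 (conj sS pS))->; rewrite colv0.
- by apply: mx_colv_ext => y; rewrite -!mulmxA -!mxopE // SSC.
Qed.

Lemma symop_inj_inverse M : symmetric_op M -> injective M ->
  exists q, (forall u, M (kerop q u) = u) /\ (forall x, kerop q (M x) = x).
Proof.
move=> hM injM; have Munit : mxop M \in unitmx.
  rewrite unitmxE unitfE; apply/negP => /det0P [v /eqP v_neq0 vM0]; apply: v_neq0.
  have : M (vcol v^T) = M 0.
    apply: (can_inj colvK); rewrite mxopE // vcolK -(mxop_tr hM) -trmx_mul vM0.
    by rewrite trmx0 (symop0 hM) colv0.
  by move=> /injM /(congr1 colv); rewrite vcolK colv0 => /(congr1 trmx); rewrite trmxK trmx0.
pose q s t := invmx (mxop M) (enum_rank s) (enum_rank t).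
have mxker_q : mxker q = invmx (mxop M).
  by apply/matrixP => i j; rewrite mxE /q !enum_valK.
exists q; split=> [u|x]; apply: (can_inj colvK).
  by rewrite mxopE // colv_kerop mxker_q mulmxA mulmxV // mul1mx.
by rewrite colv_kerop mxker_q mxopE // mulmxA mulVmx // mul1mx.
Qed.

End OperatorMatrix.

(** * Coercivity and the least eigenvalue *)

Section RayleighBounds.
Variables (R : realType) (T : finType).
Implicit Types (x : T -> R) (M D : (T -> R) -> (T -> R)).

Lemma symop_inj_coercive M : symmetric_op M -> injective M ->
  exists2 K, 0 <= K & forall x, dotv x x <= K * dotv (M x) (M x).
Proof.
move=> hM injM; have [q [_ qM]] := symop_inj_inverse hM injM.
have [K K_ge0 hK] := kerop_bounded q.
by exists K => // x; have := hK (M x); rewrite qM.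
Qed.

Lemma psd_inj_coercive M : psd_op M -> injective M ->
  exists2 c, 0 < c & forall x, c * dotv x x <= dotv x (M x).
Proof.
move=> psdM injM; have [K1 K1_ge0 hK1] := symop_inj_coercive psdM.1 injM.
have [K2 K2_ge0 hK2] := psd_sqr_le_form psdM.
have K_gt0 : 0 < K1 * K2 + 1 by have := mulr_ge0 K1_ge0 K2_ge0; lra.
exists (K1 * K2 + 1)^-1 => [|x]; first by rewrite invr_gt0.
rewrite -(ler_pM2l K_gt0) mulrA mulfV ?gt_eqF // mul1r.
have := hK1 x; have := ler_wpM2l K1_ge0 (hK2 x); have := psdM.2 x; nra.
Qed.

Definition rayleigh_lb D (mu : R) := forall x, mu * dotv x x <= dotv x (D x).

Lemma rayleigh_lb_max D lam : psd_op D -> op_eigenvalue D lam ->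
  exists m, rayleigh_lb D m /\ forall mu, rayleigh_lb D mu -> mu <= m.
Proof.
move=> [_ D_ge0] [x0 [[t0 x0t0] Dx0]].
have x0_gt0 : 0 < dotv x0 x0.
  rewrite lt0r dotv_ge0 andbT; apply: contra x0t0 => /eqP/dotv_eq0->.
  by rewrite /=.
have Dx0E : dotv x0 (D x0) = lam * dotv x0 x0.
  by rewrite -dotvZr; congr dotv; apply/funext => t; exact: Dx0.
have supE : has_sup (rayleigh_lb D).
  split; first by exists 0 => x; rewrite mul0r.
  by exists lam => mu /(_ x0); rewrite Dx0E ler_pM2r.
exists (sup (rayleigh_lb D)); split; last by move=> mu /(sup_upper_bound supE).
move=> x; have [->|x_neq0] := eqVneq (dotv x x) 0; first by rewrite mulr0.
have x_gt0 : 0 < dotv x x by rewrite lt0r x_neq0 dotv_ge0.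
rewrite leNgt; apply/negP => hlt.
set r := dotv x (D x) / dotv x x.
have r_lt : r < sup (rayleigh_lb D) by rewrite ltr_pdivrMr.
have [|e /(_ x) He] := sup_adherent (eps := sup (rayleigh_lb D) - r) _ supE.
  by rewrite subr_gt0.
rewrite opprB addrCA subrr addr0 => r_lt_e.
by rewrite -ler_pdivlMr // -/r in He; have := lt_le_trans r_lt_e He; rewrite ltxx.
Qed.

Lemma rayleigh_lb_max_eigen D m : psd_op D -> rayleigh_lb D m ->
  (forall mu, rayleigh_lb D mu -> mu <= m) -> op_eigenvalue D m.
Proof.
move=> [sD _] m_lb m_max; pose Dm x := D x - (fun t => m * x t).
have psdDm : psd_op Dm.
  split=> [x y|x]; last by rewrite /Dm dotvBr dotvZr subr_ge0.
  by rewrite /Dm dotvBl dotvBr sD dotvZl dotvZr dotvC.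
have [injDm|] := pselect (injective Dm).
  have [c c_gt0 hc] := psd_inj_coercive psdDm injDm.
  suff : m + c <= m by rewrite gerDl leNgt c_gt0.
  apply: m_max => x; have := hc x; have := m_lb x.
  by rewrite /Dm dotvBr dotvZr mulrDl; lra.
move=> /existsNP [x /existsNP [y /not_implyP [Dmxy x_neq_y]]].
have [t xyt] : exists t, (x - y) t != 0.
  by apply: neq0_witness => /subr0_eq.
exists (x - y); split=> [|s]; first by exists t.
have /(congr1 (fun v => v s)) : Dm (x - y) = 0 by rewrite (symopB psdDm.1) Dmxy subrr.
by rewrite /Dm !fctE => /eqP; rewrite subr_eq0 => /eqP.
Qed.

Lemma is_lambda_min_le D lam : psd_op D -> is_lambda_min D lam -> rayleigh_lb D lam.
Proof.
move=> psdD [ev_lam lam_min]; have [m [m_lb m_max]] := rayleigh_lb_max psdD ev_lam.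
move=> x; apply: le_trans (m_lb x); rewrite ler_wpM2r ?dotv_ge0 //.
exact/lam_min/rayleigh_lb_max_eigen.
Qed.

End RayleighBounds.

(** * Convex smooth functions *)

Lemma le_of_le_add_invn (R : archiNumFieldType) (a b c : R) : 0 <= c ->
  (forall N : nat, (0 < N)%N -> a <= b + c / N%:R) -> a <= b.
Proof.
move=> c_ge0 H; apply/ler_addgt0Pr => e e_gt0; set N := (Num.bound (c / e)).+1.
have N_gt : c / e < N%:R.
  apply: lt_le_trans (archi_boundP (divr_ge0 c_ge0 (ltW e_gt0))) _.
  by rewrite ler_nat.
apply: le_trans (H N isT) _; rewrite lerD2l ler_pdivrMr ?ltr0n // mulrC.
by rewrite -ler_pdivrMr // ltW.
Qed.

Lemma sumr_nat_succ (R : numFieldType) (N : nat) :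
  \sum_(0 <= k < N) (k.+1)%:R = N%:R * (N%:R + 1) / 2 :> R.
Proof.
elim: N => [|N IH]; first by rewrite big_geq // !mul0r.
by rewrite big_nat_recr //= IH -natr1; field.
Qed.

Section ConvexSmooth.
Variables (R : realType) (T : finType).
Implicit Types (x y h : T -> R) (f : (T -> R) -> R) (g : (T -> R) -> (T -> R)).

Lemma convex_gradient_le f g : convex_fun f -> has_gradient f g ->
  forall x y, f x + dotv (g x) (y - x) <= f y.
Proof.
move=> f_cvx f_grad x y; set h := y - x.
suff : dotv (g x) h <= f y - f x by lra.
have nh_ge0 := normv_ge0 h.
apply/ler_addgt0Pr => e e_gt0; set eps := e / (normv h + 1).
have eps_gt0 : 0 < eps by rewrite divr_gt0 //; lra.
have eps_nh : eps * normv h <= e.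
  by rewrite /eps mulrAC ler_pdivrMr; [nra | lra].
have [del del_gt0 hdel] := f_grad x eps eps_gt0.
(* move from [x] towards [y] by a step [a] short enough for the gradient estimate *)
set a := del / (del + normv h + 1).
have a_gt0 : 0 < a by rewrite divr_gt0 //; lra.
have a_ge0 := ltW a_gt0.
have a_le1 : a <= 1 by rewrite ler_pdivrMr ?mul1r; lra.
have ah_lt : normv (fun t => a * h t) < del.
  by rewrite normvZ // /a mulrAC ltr_pdivrMr; [nra | lra].
have := hdel _ ah_lt; rewrite normvZ // dotvZr => /lerNnormlW.
have -> : (fun t => x t + a * h t) = (fun t => a * y t + (1 - a) * x t).
  by apply/funext => t; rewrite /h !fctE; ring.
have := f_cvx y x a a_ge0 a_le1 => hcvx hgrad.
have : a * (dotv (g x) h - e) <= a * (f y - f x) by nra.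
by rewrite ler_pM2l // => ?; lra.
Qed.

Lemma smooth_gradient_dotv_le L f g x h a : L_smooth L f g -> 0 <= a ->
  dotv (g (x + (fun t => a * h t)) - g x) h <= L * a * dotv h h.
Proof.
move=> [_ g_lip] a_ge0; apply: le_trans (dotv_le_normv _ _) _.
have := g_lip (x + (fun t => a * h t)) x; rewrite !subvE.
have -> : x + (fun t => a * h t) - x = (fun t => a * h t) by rewrite addrC addKr.
rewrite normvZ // -normv_sqr expr2 !mulrA => hle.
by rewrite ler_wpM2r ?normv_ge0.
Qed.

Lemma smooth_chord_le L f g x h a b : convex_fun f -> L_smooth L f g ->
  0 <= a -> a <= b ->
  f (x + (fun t => b * h t)) - f (x + (fun t => a * h t))
    <= (b - a) * (dotv (g x) h + L * b * dotv h h).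
Proof.
move=> f_cvx f_smooth a_ge0 ab.
have := convex_gradient_le f_cvx f_smooth.1 (x + (fun t => b * h t)) (x + (fun t => a * h t)).
have -> : x + (fun t => a * h t) - (x + (fun t => b * h t)) = (fun t => - (b - a) * h t).
  by apply/funext => t; rewrite !fctE; ring.
rewrite dotvZr => hcvx.
have := smooth_gradient_dotv_le x h f_smooth (le_trans a_ge0 ab); rewrite dotvBl => hgrad.
have ba_ge0 : 0 <= b - a by rewrite subr_ge0.
by have := ler_wpM2l ba_ge0 hgrad; lra.
Qed.

Lemma smooth_descent L f g : 0 <= L -> convex_fun f -> L_smooth L f g ->
  forall x y, f y <= f x + dotv (g x) (y - x) + L / 2 * dotv (y - x) (y - x).
Proof.
move=> L_ge0 f_cvx f_smooth x y; set h := y - x.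
set G := dotv (g x) h; set q := dotv h h; have q_ge0 : 0 <= q := dotv_ge0 h.
have c_ge0 : 0 <= L / 2 * q by rewrite mulr_ge0 ?divr_ge0.
suff riemann N : (0 < N)%N -> f y - f x - G <= L / 2 * q + L / 2 * q / N%:R.
  by have := le_of_le_add_invn c_ge0 riemann; lra.
(* Riemann sum along the segment [x_k = x + (k / N) h], [0 <= k <= N] *)
move=> N_gt0; have N_gt0' : 0 < N%:R :> R by rewrite ltr0n.
pose xk k := x + (fun t => k%:R / N%:R * h t).
have xk0 : xk 0%N = x by apply/funext => t; rewrite /xk !fctE !mul0r addr0.
have xkN : xk N = y.
  by apply/funext => t; rewrite /xk !fctE divff ?gt_eqF // mul1r /h !fctE addrC subrK.
have : \sum_(0 <= k < N) (f (xk k.+1) - f (xk k))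
    <= \sum_(0 <= k < N) (G / N%:R + L * q * k.+1%:R / N%:R ^+ 2).
  apply: ler_sum => k _; apply: le_trans (smooth_chord_le x h f_cvx f_smooth _ _) _.
  - by rewrite divr_ge0.
  - by rewrite ler_pM2r ?invr_gt0 // ler_nat.
  suff -> : (k.+1%:R / N%:R - k%:R / N%:R) * (G + L * (k.+1%:R / N%:R) * q)
    = G / N%:R + L * q * k.+1%:R / N%:R ^+ 2 by [].
  by rewrite -natr1; field; rewrite gt_eqF.
rewrite (telescope_sumr (fun k => f (xk k))) // xk0 xkN big_split /=.
rewrite sumr_const_nat subn0 -[G / N%:R *+ N]mulr_natr divfK ?gt_eqF //.
have -> : \sum_(0 <= k < N) L * q * k.+1%:R / N%:R ^+ 2
    = L * q / N%:R ^+ 2 * (N%:R * (N%:R + 1) / 2).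
  by rewrite -sumr_nat_succ [RHS]mulr_sumr; apply: eq_bigr => k _; rewrite mulrAC.
have -> : L * q / N%:R ^+ 2 * (N%:R * (N%:R + 1) / 2)
    = L / 2 * q + L / 2 * q / N%:R by field; rewrite gt_eqF.
lra.
Qed.

End ConvexSmooth.

(** * The primal-dual iteration *)

Definition avgv (R : realType) (T : finType) (ys : nat -> T -> R) (k : nat) : T -> R :=
  fun s => k%:R^-1 * \sum_(1 <= t < k.+1) ys t s.

Lemma convex_avgv_le (R : realType) (T : finType) (F : (T -> R) -> R)
  (G : (T -> R) -> (T -> R)) (ys : nat -> T -> R) (k : nat) :
  (forall x y, F x + dotv (G x) (y - x) <= F y) -> (0 < k)%N ->
  k%:R * F (avgv ys k) <= \sum_(1 <= t < k.+1) F (ys t).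
Proof.
move=> F_cvx k_gt0; set a := avgv ys k.
have : \sum_(1 <= t < k.+1) (F a + dotv (G a) (ys t - a)) <= \sum_(1 <= t < k.+1) F (ys t).
  by apply: ler_sum => t _; exact: F_cvx.
rewrite big_split /= sumr_const_nat subSS subn0 -dotv_sumr sumrB sumr_const_nat subSS subn0.
suff -> : \sum_(1 <= t < k.+1) ys t - a *+ k = 0 by rewrite dotv0r addr0 mulr_natl.
apply/funext => s; rewrite fct_sumE natmulfctE !fctE /a /avgv -mulrnAl -mulr_natr.
by rewrite mulVf ?mul1r ?subrr // pnatr_eq0 -lt0n.
Qed.

Section PrimalDualIteration.
Variables (R : realType) (T : finType).
Variables (B C D S : (T -> R) -> (T -> R)) (F : (T -> R) -> R).
Variables (G : (T -> R) -> (T -> R)) (L lam gamma : R) (ystar w : T -> R).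
Variables (ys zs : nat -> T -> R).
Implicit Types (x y : T -> R).

Hypotheses (symB : symmetric_op B) (psdC : psd_op C) (psdD : psd_op D).
Hypotheses (psdS : psd_op S) (SS : forall x, S (S x) = B x).
Hypotheses (SC : forall x, S (C x) = C (S x)) (BC : forall x, B (C x) = C (B x)).
Hypothesis step_cond :
  forall x, 0 <= dotv x (x - (fun s => 2^-1 * C x s) - S (D (S x))).
Hypotheses (D_lb : rayleigh_lb D lam) (gamma_gt0 : 0 < gamma) (gammaL : gamma * L <= lam).
Hypothesis F_cvx : forall x y, F x + dotv (G x) (y - x) <= F y.
Hypothesis F_desc :
  forall x y, F y <= F x + dotv (G x) (y - x) + L / 2 * dotv (y - x) (y - x).
Hypotheses (Sys : S ystar = ystar) (Dys : D ystar = ystar) (Cys : C ystar = 0).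
Hypothesis Gys : G ystar = C w.
Hypothesis z0 : zs 0%N = 0.
Hypothesis y_next :
  forall k, ys k.+1 = B (D (ys k)) - (fun s => gamma * B (G (ys k)) s) - zs k.
Hypothesis z_next : forall k, zs k.+1 = zs k + C (ys k.+1).

Let symC := psdC.1.
Let symS := psdS.1.

Definition primal_step t := D (ys t) - (fun s => gamma * G (ys t) s).

Fixpoint dual_acc t : T -> R :=
  if t is t'.+1 then dual_acc t' + (primal_step t' - C (dual_acc t')) else 0.

Definition pre_iterate t := primal_step t - C (dual_acc t).

Lemma iterate_of_dual_factor t :
  zs t = B (C (dual_acc t)) -> ys t.+1 = B (pre_iterate t).
Proof.
move=> zt; rewrite y_next zt /pre_iterate /primal_step.
by rewrite !(symopB symB) (symopZ symB).
Qed.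

Lemma dual_factor t : zs t = B (C (dual_acc t)).
Proof.
elim: t => [|t zt]; first by rewrite z0 /= (symop0 symC) (symop0 symB).
rewrite z_next (iterate_of_dual_factor zt) zt -BC -(symopD symB).
by rewrite -(symopD symC).
Qed.

Lemma iterate_factor t : ys t.+1 = S (S (pre_iterate t)).
Proof. by rewrite SS; exact/iterate_of_dual_factor/dual_factor. Qed.

Definition SDS x := S (D (S x)).

Definition dual_shift t := S (dual_acc t) + (fun s => gamma * S w s).

Definition err t := S (pre_iterate t) - ystar.

Definition bregman y := F y - F ystar - dotv (G ystar) (y - ystar).

Definition lyap t :=
  2^-1 * dotv (err t) (SDS (err t)) + 2^-1 * dotv (dual_shift t.+1) (C (dual_shift t.+1)).

Lemma SDS_sym : symmetric_op SDS.
Proof. by move=> x y; rewrite /SDS symS psdD.1 symS. Qed.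

Lemma SDS_ge0 x : 0 <= dotv x (SDS x).
Proof. by rewrite /SDS -symS psdD.2. Qed.

Lemma iterate_err t : ys t.+1 = S (err t) + ystar.
Proof. by rewrite iterate_factor /err (symopB symS) Sys subrK. Qed.

Lemma dual_shift_next t : dual_shift t.+1 = dual_shift t + (err t + ystar).
Proof.
rewrite /dual_shift /err /= (symopD symS) subrK.
by apply/funext => s; rewrite !fctE; ring.
Qed.

Lemma err_next t : err t.+1 =
  SDS (err t) - (fun s => gamma * (S (G (ys t.+1)) - S (G ystar)) s) - C (dual_shift t.+1).
Proof.
rewrite {1}/err /pre_iterate /primal_step !(symopB symS) (symopZ symS) SC /dual_shift.
rewrite (symopD symC) (symopZ symC) -(SC w) -Gys [X in D X]iterate_err (symopD psdD.1).
rewrite (symopD symS) Dys Sys -/(SDS _).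
by apply/funext => s; rewrite !fctE; ring.
Qed.

Lemma bregman_ge0 y : 0 <= bregman y.
Proof. by have := F_cvx ystar y; rewrite /bregman; lra. Qed.

Lemma bregman_le y1 y2 : bregman y2 <=
  dotv (G y1 - G ystar) (y2 - ystar) + L / 2 * dotv (y2 - y1) (y2 - y1).
Proof.
have := F_cvx y1 ystar; have := F_desc y1 y2.
set Q := dotv (y2 - y1) (y2 - y1); rewrite /bregman dotvBl !dotvBr; lra.
Qed.

Lemma lyap_ge0 t : 0 <= lyap t.
Proof. by rewrite /lyap; have := SDS_ge0 (err t); have := psdC.2 (dual_shift t.+1); lra. Qed.

Lemma lyap_diff t : lyap t - lyap t.+1 =
  2^-1 * dotv (err t) (SDS (err t)) - 2^-1 * dotv (err t.+1) (SDS (err t.+1))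
  - dotv (C (dual_shift t.+1)) (err t.+1) - 2^-1 * dotv (err t.+1) (C (err t.+1)).
Proof.
have ystar_C x : dotv ystar (C x) = 0 by rewrite -symC Cys dotv0l.
rewrite /lyap (dual_shift_next t.+1).
move: (err t) (err t.+1) (dual_shift t.+1) => u v sh.
by rewrite !(symopD symC) Cys addr0 !dotvDl !dotvDr !ystar_C (dotvC v (C sh)) -(symC sh v); lra.
Qed.

Lemma lyap_decrease t : gamma * bregman (ys t.+2) <= lyap t - lyap t.+1.
Proof.
set u := err t; set v := err t.+1; set sh := dual_shift t.+1.
set gap := S (G (ys t.+1)) - S (G ystar).
have y2E : ys t.+2 - ystar = S v by rewrite iterate_err addrK.
have y21E : ys t.+2 - ys t.+1 = S (v - u).
  by rewrite !iterate_err (symopB symS); apply/funext => s; rewrite !fctE; ring.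
have gapE : gamma * dotv gap v = dotv (SDS u - v - C sh) v.
  rewrite -dotvZl; congr dotv; rewrite /v err_next -/u -/sh -/gap.
  by apply/funext => s; rewrite !fctE; ring.
have hgap : gamma * bregman (ys t.+2) <=
    gamma * dotv gap v + gamma * L / 2 * dotv (S (v - u)) (S (v - u)).
  have := bregman_le (ys t.+1) (ys t.+2).
  rewrite y2E y21E -(symS (G _ - G _)) (symopB symS) -/gap.
  move: (bregman _) (dotv gap v) (dotv (S _) _) => b g q b_le.
  rewrite -!mulrA -mulrDr; apply: ler_wpM2l; first exact: ltW.
  by rewrite mulrA.
rewrite lyap_diff -/u -/v -/sh; clearbody u v sh gap.
have hsmooth : gamma * L * dotv (S (v - u)) (S (v - u)) <= dotv (v - u) (SDS (v - u)).
  rewrite /SDS -(symS (v - u)); apply: le_trans _ (D_lb _).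
  by rewrite ler_wpM2r ?dotv_ge0.
have hcond := step_cond v; rewrite -/(SDS v) !dotvBr dotvZr in hcond.
rewrite (symopB SDS_sym) !dotvBl !dotvBr -(SDS_sym u v) (dotvC v (SDS u)) in hsmooth.
rewrite gapE !dotvBl in hgap.
lra.
Qed.

Lemma lyap_nonincreasing t : lyap t <= lyap 0.
Proof.
elim: t => [//|t IH]; apply: le_trans IH.
by have := lyap_decrease t; have := mulr_ge0 (ltW gamma_gt0) (bregman_ge0 (ys t.+2)); lra.
Qed.

Lemma bregman_sum_bounded : exists K, forall k, \sum_(1 <= t < k.+1) bregman (ys t) <= K.
Proof.
exists (bregman (ys 1%N) + lyap 0 / gamma) => -[|k].
  by rewrite big_geq // addr_ge0 ?bregman_ge0 // divr_ge0 ?lyap_ge0 ?ltW.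
have tail : gamma * \sum_(2 <= t < k.+2) bregman (ys t) <= lyap 0 - lyap k.
  elim: k => [|k IH]; first by rewrite big_geq // mulr0 subrr.
  by rewrite big_nat_recr //= mulrDr; have := lyap_decrease k; lra.
rewrite big_ltn // lerD2l ler_pdivlMr // mulrC.
by have := lyap_ge0 k; lra.
Qed.

Lemma dual_bounded : exists K, forall k, dotv (zs k) (zs k) <= K.
Proof.
have [KS KS_ge0 hKS] := symop_bounded symS.
have [KC KC_ge0 hKC] := psd_sqr_le_form psdC.
set c := fun s => gamma * C (S w) s.
exists (KS * (2 * (KC * (2 * lyap 0)) + 2 * dotv c c)) => -[|t].
  by rewrite z0 dotv0l mulr_ge0 // addr_ge0 // !mulr_ge0 ?dotv_ge0 ?lyap_ge0.
have -> : zs t.+1 = S (C (dual_shift t.+1) - c).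
  by rewrite dual_factor -SS SC /dual_shift (symopD symC) (symopZ symC) addrK.
apply: le_trans (hKS _) _; apply: ler_wpM2l => //.
apply: le_trans (dotv_sub_le _ _) _; rewrite lerD2r; apply: ler_wpM2l => //.
apply: le_trans (hKC _) _; apply: ler_wpM2l => //.
by have := lyap_nonincreasing t; have := SDS_ge0 (err t); rewrite /lyap; lra.
Qed.

Lemma sum_dual k : \sum_(1 <= t < k.+1) C (ys t) = zs k.
Proof.
elim: k => [|k IH]; first by rewrite big_geq // z0.
by rewrite big_nat_recr //= IH z_next.
Qed.

Lemma C_avgv k : C (avgv ys k) = fun s => k%:R^-1 * zs k s.
Proof.
have -> : avgv ys k = fun s => k%:R^-1 * (\sum_(1 <= t < k.+1) ys t) s.
  by apply/funext => s; rewrite fct_sumE.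
by rewrite (symopZ symC) (symop_sum symC) sum_dual.
Qed.

Lemma dotv_Gys x : dotv (G ystar) (x - ystar) = dotv w (C x).
Proof. by rewrite Gys dotvBr symC symC Cys dotv0r subr0. Qed.

Lemma avgv_gap_ge k : (0 < k)%N ->
  dotv w (zs k) <= k%:R * (F (avgv ys k) - F ystar).
Proof.
move=> k_gt0; have k_gt0' : 0 < k%:R :> R by rewrite ltr0n.
have := F_cvx ystar (avgv ys k); rewrite dotv_Gys C_avgv dotvZr => h.
have h' : k%:R^-1 * dotv w (zs k) <= F (avgv ys k) - F ystar by lra.
by have := ler_wpM2l (ltW k_gt0') h'; rewrite mulVKf ?gt_eqF.
Qed.

Lemma avgv_gap_le k : (0 < k)%N -> k%:R * (F (avgv ys k) - F ystar)
  <= \sum_(1 <= t < k.+1) bregman (ys t) + dotv w (zs k).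
Proof.
move=> k_gt0; rewrite /bregman !sumrB sumr_const_nat subSS subn0.
have -> : \sum_(1 <= t < k.+1) dotv (G ystar) (ys t - ystar) = dotv w (zs k).
  by rewrite -sum_dual dotv_sumr; apply: eq_bigr => t _; exact: dotv_Gys.
by rewrite -[F ystar *+ k]mulr_natl; have := convex_avgv_le ys F_cvx k_gt0; lra.
Qed.

Theorem primal_dual_rate : exists K, forall k, (0 < k)%N ->
  k%:R * `|F (avgv ys k) - F ystar| <= K /\ k%:R * normv (C (avgv ys k)) <= K.
Proof.
have [K1 hK1] := bregman_sum_bounded; have [K2 hK2] := dual_bounded.
have K2_ge0 : 0 <= K2 := le_trans (dotv_ge0 _) (hK2 0%N).
exists (`|K1| + normv w * Num.sqrt K2 + Num.sqrt K2) => k k_gt0.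
have k_gt0' : 0 < k%:R :> R by rewrite ltr0n.
have nz : normv (zs k) <= Num.sqrt K2 by rewrite ler_sqrt.
have := le_trans (abs_dotv_le w (zs k)) (ler_wpM2l (normv_ge0 w) nz).
rewrite ler_norml => /andP [wz_lb wz_ub]; split.
  rewrite -[k%:R](ger0_norm (ltW k_gt0')) -normrM mulrBr ler_norml.
  have := avgv_gap_ge k_gt0; have := avgv_gap_le k_gt0; have := hK1 k.
  have := ler_norm K1; have := sqrtr_ge0 K2; rewrite mulrBr.
  by move=> *; apply/andP; split; lra.
rewrite C_avgv normvZ ?mulVKf ?gt_eqF //; last by rewrite invr_ge0 ltW.
by apply: le_trans nz _; rewrite lerDr addr_ge0 ?mulr_ge0 ?normv_ge0 ?sqrtr_ge0.
Qed.

End PrimalDualIteration.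

(** * The networked problem *)

Lemma sum_sigT (R : nmodType) (I : finType) (T_ : I -> finType)
  (F : {i : I & T_ i} -> R) :
  \sum_s F s = \sum_i \sum_(t : T_ i) F (Tagged T_ t).
Proof. by rewrite sig_big_dep; apply: eq_bigr => -[i t]. Qed.

Section Network.
Variables (R : realType) (P I : nat) (n : 'I_P -> nat) (V : 'I_P -> {set 'I_I}).
Local Notation Sx := (Sidx n V).
Local Notation Yx := (Yidx n).
Implicit Types (x y v : Sx -> R).

Lemma sum_Sidx (F : Sx -> R) : \sum_s F s =
  \sum_p \sum_(j : 'I_#|V p|) \sum_(c : 'I_(n p)) F (existT _ p (j, c)).
Proof.
rewrite sum_sigT; apply: eq_bigr => p _.
by rewrite pair_big /=; apply: eq_bigr => -[j c] _.
Qed.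

Lemma sum_pick_agent p (G : 'I_I -> 'I_#|V p| -> R) :
  \sum_i (if [pick j : 'I_#|V p| | agent_of j == i] is Some j then G i j else 0)
  = \sum_j G (agent_of j) j.
Proof.
have -> : \sum_j G (agent_of j) j =
    \sum_j \sum_i (if agent_of j == i then G i j else 0).
  apply: eq_bigr => j _; rewrite (bigD1 (agent_of j)) //= eqxx big1 ?addr0 //.
  by move=> i /negbTE; rewrite eq_sym => ->.
rewrite exchange_big /=; apply: eq_bigr => i _.
case: pickP => [j /eqP ji | none]; last by rewrite big1 // => j _; rewrite none.
rewrite (bigD1 j) //= ji eqxx big1 ?addr0 // => j' j'_neq.
case: eqP => // aj'; move: j'_neq.
by rewrite (enum_val_inj (etrans aj' (esym ji))) eqxx.
Qed.

Lemma sum_loc (Phi : 'I_I -> Yx -> R -> R) y : (forall i u, Phi i u 0 = 0) ->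
  \sum_i \sum_u Phi i u (loc y i u) =
  \sum_(s : Sx) (let: existT p (j, c) := s in Phi (agent_of j) (existT _ p c) (y s)).
Proof.
move=> Phi0; rewrite sum_Sidx.
under eq_bigr do rewrite sum_sigT.
rewrite exchange_big /=; apply: eq_bigr => p _; rewrite exchange_big /=.
rewrite [RHS]exchange_big /=; apply: eq_bigr => c _.
rewrite -(sum_pick_agent (fun i j => Phi i (existT _ p c) (y (existT _ p (j, c))))).
by apply: eq_bigr => i _ /=; case: pickP => [j _|_]; rewrite ?Phi0.
Qed.

Lemma locB y x i : loc (y - x) i = loc y i - loc x i.
Proof.
by apply/funext => -[p c]; rewrite !fctE /=; case: pickP => [j _|_]; rewrite ?subrr.
Qed.

Lemma sum_dotv_loc (h : 'I_I -> Yx -> R) y : \sum_i dotv (h i) (loc y i) =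
  dotv (fun s : Sx => let: existT p (j, c) := s in h (agent_of j) (existT _ p c)) y.
Proof.
rewrite /dotv (sum_loc (Phi := fun i u r => h i u * r)) => [|i u]; last by rewrite mulr0.
by apply: eq_bigr => -[p [j c]] _.
Qed.

Lemma sum_dotv_loc_loc y : \sum_i dotv (loc y i) (loc y i) = dotv y y.
Proof.
rewrite /dotv (sum_loc (Phi := fun i u r => r * r)) => [|i u]; last by rewrite mulr0.
by apply: eq_bigr => -[p [j c]] _.
Qed.

Lemma dotv_gradS (g : 'I_I -> (Yx -> R) -> (Yx -> R)) x y :
  dotv (gradS g x) y = \sum_i dotv (g i (loc x i)) (loc y i).
Proof. by rewrite sum_dotv_loc; congr dotv; apply/funext => -[p [j c]]. Qed.

Definition consensus_value v : Yx -> R := fun u =>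
  let: existT p c := u in
  if [pick j : 'I_#|V p|] is Some j then v (existT _ p (j, c)) else 0.

Lemma consensus_liftE v : consensus v -> v = Defs.lift (consensus_value v).
Proof.
move=> v_cons; apply/funext => -[p [j c]] /=.
by case: pickP => [j' _|/(_ j)//]; exact: v_cons.
Qed.

Section Objective.
Variables (f : 'I_I -> (Yx -> R) -> R) (g : 'I_I -> (Yx -> R) -> (Yx -> R)).
Hypothesis f_cvx : forall i, convex_fun (f i).

Lemma fobj_convex_gradient_le : (forall i, has_gradient (f i) (g i)) ->
  forall x y, fobj f x + dotv (gradS g x) (y - x) <= fobj f y.
Proof.
move=> f_grad x y; rewrite dotv_gradS /fobj -big_split /=.
by apply: ler_sum => i _; rewrite locB; exact: convex_gradient_le.
Qed.

Lemma fobj_descent L : 0 <= L -> (forall i, L_smooth L (f i) (g i)) ->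
  forall x y, fobj f y <=
    fobj f x + dotv (gradS g x) (y - x) + L / 2 * dotv (y - x) (y - x).
Proof.
move=> L_ge0 f_smooth x y; rewrite dotv_gradS -sum_dotv_loc_loc mulr_sumr /fobj.
rewrite -!big_split /=; apply: ler_sum => i _; rewrite locB.
exact: smooth_descent.
Qed.

Variable Nb : 'I_I -> {set 'I_P}.
Hypothesis NbV : forall i p, p \in Nb i -> i \in V p.
Hypothesis f_local : forall i (u u' : Yx -> R),
  (forall p (c : 'I_(n p)), p \in Nb i -> u (existT _ p c) = u' (existT _ p c)) ->
  f i u = f i u'.

Lemma fobj_lift (u : Yx -> R) : fobj f (Defs.lift (V := V) u) = \sum_i f i u.
Proof.
apply: eq_bigr => i _; apply: f_local => p c /NbV iVp /=.
case: pickP => [j _ //|none].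
by have := none (enum_rank_in iVp i); rewrite /agent_of enum_rankK_in ?eqxx.
Qed.

Lemma gradS_lift_orth L (ystar : Yx -> R) : 0 <= L ->
  (forall i, L_smooth L (f i) (g i)) ->
  (forall u : Yx -> R, \sum_i f i ystar <= \sum_i f i u) ->
  forall v, consensus v -> dotv (gradS g (Defs.lift (V := V) ystar)) v = 0.
Proof.
move=> L_ge0 f_smooth ystar_opt v v_cons.
set a := dotv _ v; set b := dotv v v.
have c_ge0 : 0 <= L / 2 * b by rewrite mulr_ge0 ?divr_ge0 ?dotv_ge0.
(* optimality of [ystar] along the consensus direction [v] *)
have quad_ge0 t : 0 <= 0 + 2 * t * (a / 2) + t ^+ 2 * (L / 2 * b).
  have := fobj_descent L_ge0 f_smooth (Defs.lift ystar) (Defs.lift ystar + (fun s => t * v s)).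
  have -> : Defs.lift ystar + (fun s => t * v s) - Defs.lift ystar = (fun s => t * v s).
    by rewrite addrAC subrr add0r.
  rewrite dotvZr dotvZl dotvZr -/a -/b.
  have -> : Defs.lift ystar + (fun s => t * v s) =
      Defs.lift (ystar + (fun u => t * consensus_value v u)).
    by rewrite {1}(consensus_liftE v_cons); apply/funext => -[p [j c]].
  rewrite !fobj_lift; have := ystar_opt (ystar + (fun u => t * consensus_value v u)).
  by move: (\sum_i _) (\sum_i _) => F1 F2; nra.
have := quadratic_ge0_discr c_ge0 quad_ge0; rewrite mul0r => a2_le0.
have : a / 2 == 0 by rewrite -sqrf_eq0 eq_le a2_le0 sqr_ge0.
by rewrite mulf_eq0 invr_eq0 pnatr_eq0 orbF => /eqP.
Qed.

End Objective.

Lemma Pi_par_dotv x y : dotv (Pi_par x) y = \sum_p \sum_(c : 'I_(n p))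
  #|V p|%:R^-1 * (\sum_(j : 'I_#|V p|) x (existT _ p (j, c)))
                 * (\sum_(j : 'I_#|V p|) y (existT _ p (j, c))).
Proof.
rewrite /dotv sum_Sidx; apply: eq_bigr => p _; rewrite exchange_big /=.
by apply: eq_bigr => c _; rewrite -mulr_sumr.
Qed.

Lemma Pi_par_psd : psd_op (@Pi_par R P I n V).
Proof.
split=> [x y|x].
  rewrite Pi_par_dotv dotvC Pi_par_dotv; apply: eq_bigr => p _.
  by apply: eq_bigr => c _; rewrite mulrAC.
rewrite dotvC Pi_par_dotv; apply: sumr_ge0 => p _; apply: sumr_ge0 => c _.
by rewrite -mulrA mulr_ge0 ?invr_ge0 ?ler0n // -expr2 sqr_ge0.
Qed.

Lemma Pi_par_consensus x : consensus (Pi_par x).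
Proof. by []. Qed.

Lemma Pi_par_id x : consensus x -> Pi_par x = x.
Proof.
move=> x_cons; apply/funext => -[p [j c]] /=.
rewrite (eq_bigr (fun _ => x (existT _ p (j, c)))) => [|j' _]; last exact: x_cons.
rewrite sumr_const card_ord -[x _ *+ _]mulr_natl mulKf // pnatr_eq0 -lt0n.
exact: leq_ltn_trans (ltn_ord j).
Qed.

Section ConsensusOperator.
Variable Cop : (Sx -> R) -> (Sx -> R).
Hypotheses (psdC : psd_op Cop) (nullC : forall y, Cop y = 0 <-> consensus y).

(* [Cop + Pi_par] is invertible since [null Cop] is the range of [Pi_par] *)
Let Top y := Cop y + Pi_par y.

Let symT : symmetric_op Top.
Proof. by move=> x y; rewrite /Top dotvDl dotvDr psdC.1 Pi_par_psd.1. Qed.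

Let CPi x : Cop (Pi_par x) = 0.
Proof. exact/nullC/Pi_par_consensus. Qed.

Let injT : injective Top.
Proof.
move=> x y Txy; apply/eqP; rewrite -subr_eq0; apply/eqP; set z := x - y.
have : dotv z (Cop z) + dotv z (Pi_par z) = 0.
  by rewrite -dotvDr -/(Top z) (symopB symT) Txy subrr dotv0r.
have := psdC.2 z; have := Pi_par_psd.2 z => Pz_ge0 Cz_ge0 form0.
have Cz : Cop z = 0 by apply: psd_form_eq0 psdC _; lra.
rewrite -(Pi_par_id ((nullC z).1 Cz)); apply: psd_form_eq0 Pi_par_psd _; lra.
Qed.

Lemma Pi_perp_coercive : exists2 K, 0 <= K &
  forall y, dotv (Pi_perp y) (Pi_perp y) <= K * dotv (Cop y) (Cop y).
Proof.
have [K K_ge0 hK] := symop_inj_coercive symT injT.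
exists K => // y; suff <- : Top (Pi_perp y) = Cop y by exact: hK.
rewrite /Top -[Pi_perp y]/(y - Pi_par y) (symopB psdC.1) (symopB Pi_par_psd.1).
by rewrite CPi (Pi_par_id (Pi_par_consensus y)) subr0 subrr addr0.
Qed.

Lemma orth_consensus_range h : (forall v, consensus v -> dotv h v = 0) ->
  exists w, h = Cop w.
Proof.
move=> h_orth; have [q [Tq _]] := symop_inj_inverse symT injT.
set w := kerop q h; exists w.
suff Pw : Pi_par w = 0 by rewrite -(Tq h) /Top -/w Pw addr0.
apply: dotv_eq0.
have PwE : Pi_par w = h - Cop w by rewrite -(Tq h) /Top -/w addrC addKr.
rewrite {2}PwE dotvBr -psdC.1 CPi dotv0l subr0 dotvC.
exact/h_orth/Pi_par_consensus.
Qed.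

End ConsensusOperator.

End Network.

Lemma merit_le (R : realType) (P I : nat) (n : 'I_P -> nat) (V : 'I_P -> {set 'I_I})
  (f : 'I_I -> (Yidx n -> R) -> R) (g : 'I_I -> (Yidx n -> R) -> (Yidx n -> R))
  (ystar : Yidx n -> R) (Cop : (Sidx n V -> R) -> (Sidx n V -> R))
  (KP K : R) (y : Sidx n V -> R) (k : nat) : (0 < k)%N -> 0 <= KP ->
  (forall x, dotv (Pi_perp x) (Pi_perp x) <= KP * dotv (Cop x) (Cop x)) ->
  k%:R * `|fobj f y - fobj f (Defs.lift (V := V) ystar)| <= K ->
  k%:R * normv (Cop y) <= K ->
  merit f g ystar y <=
    (Num.sqrt KP * K * normv (gradS g (Defs.lift (V := V) ystar)) + K) / k%:R.
Proof.
move=> k_gt0 KP_ge0 hKP hF hC; have k_gt0' : 0 < k%:R :> R by rewrite ltr0n.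
have K_ge0 : 0 <= K by apply: le_trans hC; rewrite mulr_ge0 ?ler0n ?normv_ge0.
rewrite /merit; set nG := normv (gradS _ _); have nG_ge0 : 0 <= nG := normv_ge0 _.
have hperp : k%:R * normv (Pi_perp y) <= Num.sqrt KP * K.
  have : normv (Pi_perp y) <= Num.sqrt KP * normv (Cop y).
    by rewrite /normv -sqrtrM // ler_sqrt ?mulr_ge0 ?dotv_ge0.
  move/(ler_wpM2l (ltW k_gt0')); move/le_trans; apply.
  by rewrite mulrCA; apply: ler_wpM2l; rewrite ?sqrtr_ge0.
rewrite ge_max !ler_pdivlMr // !(mulrC _ k%:R); apply/andP; split.
  by rewrite mulrA; apply: ler_wpDr K_ge0 _; exact: ler_wpM2r.
by apply: le_trans hF _; rewrite lerDr !mulr_ge0 ?sqrtr_ge0.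
Qed.

Theorem theorem3 (R : realType) (P I : nat) (n : 'I_P -> nat)
  (Nb : 'I_I -> {set 'I_P}) (V : 'I_P -> {set 'I_I})
  (f : 'I_I -> (Yidx n -> R) -> R) (g : 'I_I -> (Yidx n -> R) -> (Yidx n -> R))
  (L : R)
  (Ap Bp Cp Dp : forall p : 'I_P, 'M[R]_#|V p|)
  (sqB : (Sidx n V -> R) -> (Sidx n V -> R))
  (lam : R) (ystar : Yidx n -> R) (gamma : R)
  (ys zs : nat -> Sidx n V -> R) :
  (* {i : p in N(i)} subset V_p *)
  (forall (i : 'I_I) (p : 'I_P), p \in Nb i -> i \in V p) ->
  (* f_i depends only on (y_p)_{p in N(i)} *)
  (forall (i : 'I_I) (x x' : Yidx n -> R),
     (forall (p : 'I_P) (c : 'I_(n p)), p \in Nb i ->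
        x (existT _ p c) = x' (existT _ p c)) -> f i x = f i x') ->
  (* each f_i convex and L-smooth with gradient g_i *)
  0 < L ->
  (forall i, convex_fun (f i)) ->
  (forall i, L_smooth L (f i) (g i)) ->
  (* (i) *)
  (forall y s, bdiag n Ap y s = bdiag n Bp (bdiag n Dp y) s) ->
  psd_op (bdiag n Bp) ->
  pd_op (bdiag n Dp) ->
  (* (ii) *)
  (forall y, consensus y -> forall s, bdiag n Dp y s = y s /\ bdiag n Bp y s = y s) ->
  (* (iii) *)
  psd_op (bdiag n Cp) ->
  (forall y, (forall s, bdiag n Cp y s = 0) <-> consensus y) ->
  (* (iv) *)
  (forall y s, bdiag n Bp (bdiag n Cp y) s = bdiag n Cp (bdiag n Bp y) s) ->
  (* (v) with sqB the (unique) PSD square root of B *)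
  psd_op sqB ->
  (forall y s, sqB (sqB y) s = bdiag n Bp y s) ->
  psd_op (fun y s => y s - 2^-1 * bdiag n Cp y s - sqB (bdiag n Dp (sqB y)) s) ->
  (* ystar in the (nonempty) solution set *)
  (forall y : Yidx n -> R, \sum_i f i ystar <= \sum_i f i y) ->
  (* lam = lambda_min(D), gamma in (0, lambda_min(D)/L) *)
  is_lambda_min (bdiag n Dp) lam ->
  0 < gamma -> gamma < lam / L ->
  (* the iteration, with z^0 = 0 and arbitrary y^0 *)
  (forall s, zs 0%N s = 0) ->
  (forall k s, ys k.+1 s =
     bdiag n Ap (ys k) s - gamma * bdiag n Bp (gradS g (ys k)) s - zs k s) ->
  (forall k s, zs k.+1 s = zs k s + bdiag n Cp (ys k.+1) s) ->
  (* M(y_avg^k) <= O(1/k) *)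
  exists K : R, forall k : nat, (0 < k)%N ->
    merit f g ystar (yavg ys k) <= K / k%:R.
Proof.
move=> NbV f_local L_gt0 f_cvx f_smooth A_BD psdB pdD consDB psdC nullC BC psdS SS
  step_cond ystar_opt lam_min gamma_gt0 gamma_lt z0 y_next z_next.
set B := bdiag n Bp; set C := bdiag n Cp; set D := bdiag n Dp.
set y0 := Defs.lift (V := V) ystar.
have nullC' y : C y = 0 <-> consensus y.
  by split=> [Cy0|/nullC Cy0]; [apply/nullC => s; rewrite -/C Cy0 | exact/funext].
have SS' x : sqB (sqB x) = B x by apply/funext.
have BC' x : B (C x) = C (B x) by apply/funext.
have SC x : sqB (C x) = C (sqB x) by apply: psd_sqrt_commute psdS psdC.1 _ x => y; rewrite !SS'.
have [Dy0 By0] : D y0 = y0 /\ B y0 = y0 by split; apply/funext => s; have [] := consDB y0 _ s.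
have [w Gw] := orth_consensus_range psdC nullC'
  (gradS_lift_orth f_cvx NbV f_local (ltW L_gt0) f_smooth ystar_opt).
have [KP KP_ge0 hKP] := Pi_perp_coercive psdC nullC'.
have gammaL : gamma * L <= lam by rewrite -ler_pdivlMr // ltW.
have y_next' k : ys k.+1 = B (D (ys k)) - (fun s => gamma * B (gradS g (ys k)) s) - zs k.
  by apply/funext => s; rewrite y_next A_BD.
have [K hK] := primal_dual_rate psdB.1 psdC (pd_psd pdD) psdS SS' SC BC' step_cond.2
  (is_lambda_min_le (pd_psd pdD) lam_min) gamma_gt0 gammaL
  (fobj_convex_gradient_le f_cvx (fun i => (f_smooth i).1))
  (fobj_descent f_cvx (ltW L_gt0) f_smooth)
  (psd_sqrt_fix psdS SS' By0) Dy0 ((nullC' y0).2 (fun _ _ _ _ => erefl)) Gw (funext z0)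
  y_next' (fun k => funext (z_next k)).
exists (Num.sqrt KP * K * normv (gradS g y0) + K) => k k_gt0.
by have [hF hC] := hK k k_gt0; exact: merit_le k_gt0 KP_ge0 hKP hF hC.
Qed.
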